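(* For all $p,s\in\mathbb{N}_0$ and all $x\in[0,1]$, $$1\le\frac{\prod_{i=0}^{p+s-1}(1+xi)}{\Big(\prod_{j=0}^{p-1}(1+xj)\Big)\Big(\prod_{k=0}^{s-1}(1+xk)\Big)}\le1+x\,2^{p+s}.$$
   Context: Empty products equal $1$. *)

From mathcomp Require Import all_boot all_order all_algebra.
Set Implicit Arguments. Unset Strict Implicit. Unset Printing Implicit Defensive.

(** Write [P n = \prod_(i < n) (1 + x i)] and [r p s] for the quotient.
    Splitting the last factor [1 + x (a + b + 1) = (1 + x a) + x (b + 1)] of
    [P (a + b + 2)] gives the Pascal-type recurrence
    [r (a+1) (b+1) = r a (b+1) + c_b r (a+1) b], [c_b = x (b+1) / (1 + x b)],
    with [r 0 s = r p 0 = 1].  As [0 <= c_b <= 1], induction gives [1 <= r].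
    At [x = 1] this is Pascal's rule, whence [2 ^ (p + s)]; for general [x]
    the term [x (p + s + 1)] in the invariant
    [r p s + x (p + s + 1) <= 1 + x 2 ^ (p + s)] absorbs the excess
    [c_b <= x (b + 1)] of each step. *)

From mathcomp Require Import all_boot all_order all_algebra.
From mathcomp Require Import ring lra.
Import Order.TTheory GRing.Theory Num.Theory.
Local Open Scope ring_scope.

Set Implicit Arguments.
Unset Strict Implicit.

Lemma natr_succ_le_exp2 (R : numDomainType) (n : nat) : n.+1%:R <= 2 ^+ n :> R.
Proof. by rewrite -natrX ler_nat ltn_expl. Qed.

Section XBinomial.
Variables (R : realFieldType) (x : R).
Hypothesis x_ge0 : 0 <= x.

Definition xrising (n : nat) : R := \prod_(i < n) (1 + x * i%:R).

Definition xbinom (p s : nat) : R := xrising (p + s) / (xrising p * xrising s).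

Lemma xfactor_gt0 (i : nat) : 0 < 1 + x * i%:R.
Proof. by rewrite ltr_wpDr ?mulr_ge0. Qed.

Lemma xrising_gt0 (n : nat) : 0 < xrising n.
Proof. by apply: prodr_gt0 => i _; apply: xfactor_gt0. Qed.

Lemma xrisingS (n : nat) : xrising n.+1 = xrising n * (1 + x * n%:R).
Proof. by rewrite /xrising big_ord_recr. Qed.

Lemma xbinom0n (s : nat) : xbinom 0 s = 1.
Proof. by rewrite /xbinom /xrising big_ord0 mul1r divff // gt_eqF ?xrising_gt0. Qed.

Lemma xbinomn0 (p : nat) : xbinom p 0 = 1.
Proof. by rewrite /xbinom addn0 /xrising big_ord0 mulr1 divff // gt_eqF ?xrising_gt0. Qed.

Definition pascal_coef (b : nat) : R := x * b.+1%:R / (1 + x * b%:R).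

Lemma pascal_coef_ge0 (b : nat) : 0 <= pascal_coef b.
Proof. by rewrite divr_ge0 ?mulr_ge0 // ltW ?xfactor_gt0. Qed.

Lemma pascal_coef_le (b : nat) : pascal_coef b <= x * b.+1%:R.
Proof.
by rewrite ler_pdivrMr ?xfactor_gt0 // ler_peMr ?mulr_ge0 // lerDl mulr_ge0.
Qed.

Lemma xbinomSS (a b : nat) :
  xbinom a.+1 b.+1 = xbinom a b.+1 + pascal_coef b * xbinom a.+1 b.
Proof.
rewrite /xbinom /pascal_coef addSn addnS !xrisingS -!natr1.
have := xrising_gt0 (a + b); have := xrising_gt0 a; have := xrising_gt0 b.
have := xfactor_gt0 a; have := xfactor_gt0 b.
by move=> *; field; rewrite !gt_eqF.
Qed.

Lemma xbinom_ge1 (p s : nat) : 1 <= xbinom p s.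
Proof.
elim: p s => [|a IHa] s; first by rewrite xbinom0n.
elim: s => [|b IHb]; first by rewrite xbinomn0.
by rewrite xbinomSS ler_wpDr // mulr_ge0 ?pascal_coef_ge0 ?(le_trans ler01 IHb).
Qed.

Hypothesis x_le1 : x <= 1.

Lemma pascal_coef_le1 (b : nat) : pascal_coef b <= 1.
Proof.
by rewrite ler_pdivrMr ?xfactor_gt0 // mul1r -natr1 mulrDr mulr1 addrC lerD2r.
Qed.

Lemma xbinom_upper (p s : nat) :
  xbinom p s + x * (p + s).+1%:R <= 1 + x * 2 ^+ (p + s).
Proof.
elim: p s => [|a IHa] s.
  by rewrite xbinom0n add0n lerD2l ler_wpM2l ?natr_succ_le_exp2.
elim: s => [|b IHb].
  by rewrite xbinomn0 addn0 lerD2l ler_wpM2l ?natr_succ_le_exp2.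
rewrite xbinomSS.
(* i.e. [c r <= (r - 1) + c], so the weighted term costs at most [c] over [r - 1] *)
have slack : 0 <= (1 - pascal_coef b) * (xbinom a.+1 b - 1).
  by rewrite mulr_ge0 ?subr_ge0 ?pascal_coef_le1 ?xbinom_ge1.
have := pascal_coef_le b; have := IHa b.+1; move: IHb.
rewrite !addSn !addnS !exprS -!natr1 !natrD.
have := mulr_ge0 x_ge0 (ler0n R a).
by move=> *; lra.
Qed.

End XBinomial.

Theorem lemma4p3 (R : realFieldType) (p s : nat) (x : R) :
  0 <= x <= 1 ->
  let q := (\prod_(i < p + s) (1 + x * i%:R)) /
           ((\prod_(j < p) (1 + x * j%:R)) * (\prod_(k < s) (1 + x * k%:R))) in
  1 <= q <= 1 + x * 2 ^+ (p + s).
Proof.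
move=> /andP[x_ge0 x_le1] /=.
change (1 <= xbinom x p s <= 1 + x * 2 ^+ (p + s)).
have slack_ge0 : 0 <= x * (p + s).+1%:R by rewrite mulr_ge0.
have := xbinom_upper x_ge0 x_le1 p s.
by rewrite xbinom_ge1 //=; lra.
Qed.
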